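(* Let $\Sigma$ be a finite set, $I\subseteq\Sigma\times\Sigma$ a symmetric irreflexive relation, and $M=M(\Sigma,I)$ the free partially commutative monoid. Let $\Sigma_0\subseteq\Sigma$, $I_0=(\Sigma_0\times\Sigma_0)\cap I$ and $M_0=M(\Sigma_0,I_0)$, regarded as a submonoid of $M$ via the canonical map. Then the monoid ring $\mathbb{Z}M$ is a free left $\mathbb{Z}M_0$-module.
   Context: For a finite alphabet $\Sigma$ and a symmetric irreflexive relation $I\subseteq \Sigma\times\Sigma$ (the commutation relation), the free partially commutative monoid $M(\Sigma,I)$ is the monoid with presentation $\langle \Sigma \mid ab=ba \text{ for all } (a,b)\in I\rangle$. The canonical map $M(\Sigma_0,I_0)\to M(\Sigma,I)$ sends the class of a word over $\Sigma_0$ to its class in $M(\Sigma,I)$; $\mathbb{Z}M_0$ acts on $\mathbb{Z}M$ by left multiplication. *)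

From HB Require Import structures.
From mathcomp Require Import all_boot all_order all_algebra generic_quotient.
From mathcomp Require Import finmap boolp.
From Stdlib Require Relations.

Set Implicit Arguments.
Unset Strict Implicit.
Unset Printing Implicit Defensive.

Import GRing.Theory.
Local Open Scope fset_scope.

(* Free partially commutative monoid M(T, I) = < T | ab = ba for I a b >.   *)
Section Trace.
Variables (T : finType) (I : rel T).

Definition swap_step (u v : seq T) : Prop :=
  exists (x y : seq T) (a b : T),
    I a b /\ u = x ++ a :: b :: y /\ v = x ++ b :: a :: y.

Definition trace_eq : seq T -> seq T -> Prop :=
  Relations.Relation_Operators.clos_refl_sym_trans (seq T) swap_step.

Definition trace_eqb (u v : seq T) : bool := `[< trace_eq u v >].

Lemma trace_eqb_refl : reflexive trace_eqb.
Proof. by move=> u; apply/asboolP; apply: Relations.Relation_Operators.rst_refl. Qed.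

Lemma trace_eqb_sym : symmetric trace_eqb.
Proof.
move=> u v; apply/asboolP/asboolP => H; exact: Relations.Relation_Operators.rst_sym.
Qed.

Lemma trace_eqb_trans : transitive trace_eqb.
Proof.
move=> v u w /asboolP H1 /asboolP H2; apply/asboolP; exact: Relations.Relation_Operators.rst_trans H1 H2.
Qed.

Canonical trace_equiv : equiv_rel (seq T) :=
  EquivRel trace_eqb trace_eqb_refl trace_eqb_sym trace_eqb_trans.

Definition trace := {eq_quot trace_eqb}%qT.

Definition tword (w : seq T) : trace := (\pi_trace w)%qT.
Definition tmul (x y : trace) : trace := tword (repr x ++ repr y).
Definition tone : trace := tword [::].

Definition mring := {fsfun trace -> int with 0%R}.

Definition mr_zero : mring := [fsfun].

Definition mr_add (f g : mring) : mring :=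
  [fsfun m in finsupp f `|` finsupp g => (f m + g m)%R].

Definition mr_mul (f g : mring) : mring :=
  [fsfun m in tmul @2` (finsupp f, fun _ => finsupp g) =>
     (\sum_(x <- finsupp f) \sum_(y <- finsupp g)
        (if tmul x y == m then f x * g y else 0))%R].

End Trace.

Definition mr_push (T' T : finType) (I' : rel T') (I : rel T)
  (phi : trace I' -> trace I) (r : mring I') : mring I :=
  [fsfun m in phi @` finsupp r =>
     (\sum_(x <- finsupp r) (if phi x == m then r x else 0))%R].

Definition tmap (T' T : finType) (I' : rel T') (I : rel T) (h : T' -> T)
  (x : trace I') : trace I := tword I (map h (repr x)).

Definition subalph (T : finType) (S0 : {set T}) : finType := {x : T | x \in S0}.
Definition restr_rel (T : finType) (I : rel T) (S0 : {set T}) : rel (subalph S0) :=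
  fun a b => I (val a) (val b).

Definition lincomb (R V : Type) (v0 : V) (add : V -> V -> V)
  (act : R -> V -> V) (s : seq (R * V)) : V :=
  foldr (fun p acc => add (act p.1 p.2) acc) v0 s.

Definition free_lmodule (R V : eqType) (r0 : R) (v0 : V)
  (add : V -> V -> V) (act : R -> V -> V) : Prop :=
  exists B : V -> Prop,
    (forall v : V, exists s : seq (R * V),
        (forall p, p \in s -> B p.2) /\ v = lincomb v0 add act s) /\
    (forall s : seq (R * V),
        uniq (map snd s) -> (forall p, p \in s -> B p.2) ->
        lincomb v0 add act s = v0 -> forall p, p \in s -> p.1 = r0).

Arguments restr_rel [T] I S0 _ _.
Arguments tmap [T' T] I' I h x.

(* Scan a word from left to right and pull to the front every letter of S0
   that commutes with all letters left behind so far.  This normal form is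
   invariant under the commutation moves, so it splits every trace uniquely as
   m = incl x * t with x in M0 and t a trace from which no further letter can be
   pulled.  Hence M is the disjoint union of the cosets M0 t, and the deltas of
   these t form a basis of Z M over Z M0. *)

From HB Require Import structures.
From mathcomp Require Import all_boot all_order all_algebra generic_quotient.
From mathcomp Require Import finmap boolp.
From Stdlib Require Relations.
Import Relations.Relation_Operators.

Set Implicit Arguments.
Unset Strict Implicit.
Unset Printing Implicit Defensive.

Section TraceCongruence.
Variables (U : finType) (J : rel U).

Lemma tword_eqP (u v : seq U) : tword J u = tword J v <-> trace_eq J u v.
Proof. by split=> [/eqmodP/asboolP | ?]; last by apply/eqmodP/asboolP. Qed.

Lemma tword_repr (x : trace J) : tword J (repr x) = x.
Proof. exact: reprK. Qed.

Lemma repr_tword (u : seq U) : trace_eq J (repr (tword J u)) u.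
Proof. by apply/tword_eqP; rewrite /tword reprK. Qed.

Lemma trace_eq_ctx (x y u v : seq U) :
  trace_eq J u v -> trace_eq J (x ++ u ++ y) (x ++ v ++ y).
Proof.
elim=> [u1 v1 [x1 [y1 [a [b [Jab [-> ->]]]]]] | u1 | u1 v1 _ IH | u1 v1 w1 _ IH1 _ IH2].
- by apply: rst_step; exists (x ++ x1), (y1 ++ y), a, b; rewrite -!catA.
- exact: rst_refl.
- exact: rst_sym.
- exact: rst_trans IH2.
Qed.

Lemma trace_eq_cat (u u' v v' : seq U) :
  trace_eq J u u' -> trace_eq J v v' -> trace_eq J (u ++ v) (u' ++ v').
Proof.
move=> Hu Hv; apply: (@rst_trans _ _ _ (u' ++ v)).
  by have := trace_eq_ctx [::] v Hu.
by have := trace_eq_ctx u' [::] Hv; rewrite !cats0.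
Qed.

Lemma trace_eq_move (c : U) (s t : seq U) :
  all (J c) s -> trace_eq J (c :: s ++ t) (s ++ c :: t).
Proof.
elim: s => [|d s IH] /= => [_|/andP[Jcd /IH Hs]]; first exact: rst_refl.
apply: rst_trans (trace_eq_cat (rst_refl _ _ [:: d]) Hs).
by apply: rst_step; exists [::], (s ++ t), c, d.
Qed.

Lemma tword_cat (u v : seq U) : tword J (u ++ v) = tmul (tword J u) (tword J v).
Proof. by apply/tword_eqP/rst_sym/trace_eq_cat; apply: repr_tword. Qed.

Lemma trace_eq_map (U' : finType) (J' : rel U') (h : U' -> U) (u v : seq U') :
  (forall a b, J' a b -> J (h a) (h b)) ->
  trace_eq J' u v -> trace_eq J (map h u) (map h v).
Proof.
move=> hJ; elim=> [u1 v1 [x [y [a [b [Jab [-> ->]]]]]] | u1 | u1 v1 _ IH | u1 v1 w1 _ IH1 _ IH2].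
- by apply: rst_step; exists (map h x), (map h y), (h a), (h b); rewrite !map_cat hJ.
- exact: rst_refl.
- exact: rst_sym.
- exact: rst_trans IH2.
Qed.

End TraceCongruence.

Lemma tmap_tword (U' U : finType) (J' : rel U') (J : rel U) (h : U' -> U) (u : seq U') :
  (forall a b, J' a b -> J (h a) (h b)) -> tmap J' J h (tword J' u) = tword J (map h u).
Proof. by move=> hJ; apply/tword_eqP; apply: trace_eq_map hJ _; apply: repr_tword. Qed.

Lemma swap_step_pmap_insub (T : finType) (I : rel T) (S0 : {set T}) (u v : seq T) :
  all (mem S0) u -> swap_step I u v ->
  swap_step (restr_rel I S0) (pmap insub u) (pmap insub v).
Proof.
move=> Hu [x [y [a [b [Iab [Eu ->]]]]]]; move: Hu; rewrite Eu.
rewrite all_cat /= => /and3P[_ a0 /andP[b0 _]].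
rewrite !pmap_cat /= (insubT (mem S0) a0) (insubT (mem S0) b0).
by exists (pmap insub x), (pmap insub y), (Sub a a0), (Sub b b0).
Qed.

Lemma map_val_pmap_insub (T : finType) (S0 : {set T}) (u : seq T) :
  all (mem S0) u -> map val (pmap (insub : T -> option (subalph S0)) u) = u.
Proof.
elim: u => [|c u IH] //= /andP[c0 /IH]; by rewrite (insubT (mem S0) c0) /= => ->.
Qed.

Section Pull.
Variables (T : finType) (I : rel T) (S0 : {set T}).
Hypothesis I_sym : symmetric I.

Definition pullable (R : {set T}) (c : T) := (c \in S0) && (R \subset [set z | I c z]).

(* [(pull R w).1] lists the letters of [w] moved to the front, [(pull R w).2]
   the others in order; [R] is the set of letters already left behind. *)
Fixpoint pull (R : {set T}) (w : seq T) : seq T * seq T :=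
  if w is c :: w' then
    if pullable R c then (c :: (pull R w').1, (pull R w').2)
    else ((pull (c |: R) w').1, c :: (pull (c |: R) w').2)
  else ([::], [::]).

Lemma pullable_setU1 R c a : pullable (c |: R) a = I a c && pullable R a.
Proof. by rewrite /pullable subUset sub1set inE andbCA. Qed.

Lemma pull_S0 R w : all (mem S0) (pull R w).1.
Proof.
elim: w R => [|c w IH] R //=; case: ifP => [/andP[c0 _]|_] /=; last exact: IH.
by rewrite c0 IH.
Qed.

Lemma pull_commute R w z : z \in (pull R w).1 -> R \subset [set x | I z x].
Proof.
elim: w R => [|c w IH] R //=; case: ifP => [/andP[_ Rc]|_] /=.
  by rewrite inE => /orP[/eqP ->|/IH].
by move=> /IH; rewrite subUset => /andP[].
Qed.

Lemma pull_trace_eq R w : trace_eq I w ((pull R w).1 ++ (pull R w).2).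
Proof.
elim: w R => [|c w IH] R /=; first exact: rst_refl.
case: ifP => _ /=; first exact: (trace_eq_cat (rst_refl _ _ [:: c]) (IH R)).
apply: rst_trans (trace_eq_cat (rst_refl _ _ [:: c]) (IH (c |: R))) _.
apply: trace_eq_move; apply/allP => z /pull_commute.
by rewrite subUset sub1set inE I_sym => /andP[].
Qed.

Lemma pull_pull R w : pull R (pull R w).2 = ([::], (pull R w).2).
Proof.
elim: w R => [|c w IH] R //=; case: ifP => [_|cR] /=; first exact: IH.
by rewrite cR IH.
Qed.

Lemma pull_cat_S0 u w : all (mem S0) u ->
  pull set0 (u ++ w) = (u ++ (pull set0 w).1, (pull set0 w).2).
Proof.
elim: u => [|c u IH] /=; first by case: pull.
by move=> /andP[c0 /IH ->]; rewrite /pullable c0 sub0set.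
Qed.

Definition swap_or_eq (J : rel T) (u v : seq T) := u = v \/ swap_step J u v.

Lemma swap_or_eq_cons J c u v : swap_or_eq J u v -> swap_or_eq J (c :: u) (c :: v).
Proof.
case=> [->|[x [y [a [b [Jab [-> ->]]]]]]]; first by left.
by right; exists (c :: x), y, a, b.
Qed.

Lemma swap_or_eq_trace_eq (J : rel T) u v : swap_or_eq J u v -> trace_eq J u v.
Proof. by case=> [->|?]; [apply: rst_refl | apply: rst_step]. Qed.

Lemma pull_swap_step R u v : swap_step I u v ->
  swap_or_eq I (pull R u).1 (pull R v).1 /\ swap_or_eq I (pull R u).2 (pull R v).2.
Proof.
case=> x [y [a [b [Iab [-> ->]]]]].
elim: x R => [|c x IH] R /=; last first.
  have [h1 h2] := IH R; have [h3 h4] := IH (c |: R).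
  by case: ifP => _ /=; split=> //; apply: swap_or_eq_cons.
rewrite !pullable_setU1 (I_sym b a) Iab /=.
case Ha: (pullable R a); case Hb: (pullable R b) => /=; try by split; left.
- split; last by left.
  by right; exists [::], (pull R y).1, a, b.
- rewrite setUCA; split; first by left.
  by right; exists [::], (pull (a |: (b |: R)) y).2, a, b.
Qed.

End Pull.

Section Factorization.
Variables (T : finType) (I : rel T) (S0 : {set T}).
Hypothesis I_sym : symmetric I.
Local Notation I0 := (restr_rel I S0).
Local Notation incl := (tmap I0 I val).

Lemma pull_congr R w w' : trace_eq I w w' ->
  trace_eq I (pull I S0 R w).2 (pull I S0 R w').2 /\
  trace_eq I0 (pmap insub (pull I S0 R w).1) (pmap insub (pull I S0 R w').1).
Proof.
elim=> [u v uv | u | u v _ [h1 h2] | u v z _ [h1 h2] _ [h3 h4]].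
- have [[->|s1] /swap_or_eq_trace_eq s2] := pull_swap_step S0 I_sym R uv.
    by split=> //; apply: rst_refl.
  by split=> //; apply/rst_step/swap_step_pmap_insub=> //; apply: pull_S0.
- by split; apply: rst_refl.
- by split; apply: rst_sym.
- by split; [apply: rst_trans h3 | apply: rst_trans h4].
Qed.

Definition front (m : trace I) : trace I0 := tword I0 (pmap insub (pull I S0 set0 (repr m)).1).
Definition rest (m : trace I) : trace I := tword I (pull I S0 set0 (repr m)).2.

Lemma front_tword w : front (tword I w) = tword I0 (pmap insub (pull I S0 set0 w).1).
Proof. by apply/tword_eqP; have [] := pull_congr set0 (repr_tword I w). Qed.

Lemma rest_tword w : rest (tword I w) = tword I (pull I S0 set0 w).2.
Proof. by apply/tword_eqP; have [] := pull_congr set0 (repr_tword I w). Qed.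

Lemma front_restK m : tmul (incl (front m)) (rest m) = m.
Proof.
rewrite tmap_tword // map_val_pmap_insub ?pull_S0 // -tword_cat.
by rewrite -[RHS]tword_repr; apply/tword_eqP/rst_sym/pull_trace_eq.
Qed.

Lemma front_rest_mul x m :
  front (tmul (incl x) (rest m)) = x /\ rest (tmul (incl x) (rest m)) = rest m.
Proof.
have x_S0 : all (mem S0) (map val (repr x)).
  by apply/allP=> _ /mapP[a _ ->]; apply: valP.
rewrite /tmap [rest m]/rest -tword_cat front_tword rest_tword.
by rewrite pull_cat_S0 // pull_pull cats0 (map_pK valK) tword_repr.
Qed.

Lemma incl_mul_rest_inj x y m m' :
  tmul (incl x) (rest m) = tmul (incl y) (rest m') -> x = y /\ rest m = rest m'.
Proof.
move=> E; have [fx rx] := front_rest_mul x m; have [fy ry] := front_rest_mul y m'.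
by split; [rewrite -fx E fy | rewrite -rx E ry].
Qed.

End Factorization.

Import GRing.Theory.
Local Open Scope fset_scope.
Local Open Scope ring_scope.

Lemma big_pred1_uniq (K : eqType) (r : seq K) (a : K) (F : K -> int) : uniq r ->
  \sum_(i <- r) (if i == a then F i else 0) = if a \in r then F a else 0.
Proof.
move=> r_uniq; have [ar|ar] := boolP (a \in r).
  rewrite (bigD1_seq a) //= eqxx big1 ?addr0 // => i /negbTE -> //.
by rewrite big1_seq // => i /andP[_ ir]; case: eqP ir => // ->; rewrite (negbTE ar).
Qed.

Lemma sum_finsupp_pred1 (K : choiceType) (f : {fsfun K -> int with 0}) (a : K) :
  \sum_(i <- finsupp f) (if i == a then f i else 0) = f a.
Proof. by rewrite big_pred1_uniq ?fset_uniq //; case: finsuppP. Qed.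

Lemma sum_pred1_snd (A B : eqType) (s : seq (A * B)) (p : A * B) (F : A -> int) :
  uniq (map snd s) -> p \in s ->
  \sum_(q <- s) (if q.2 == p.2 then F q.1 else 0) = F p.1.
Proof.
elim: s => [|q s IH] //= /andP[qs s_uniq]; rewrite big_cons inE => /orP[/eqP ->|ps].
  rewrite eqxx big1_seq ?addr0 // => q' /andP[_ q's].
  by case: eqP => // E; move: qs; rewrite -E map_f.
have -> : (q.2 == p.2) = false by apply: contraNF qs => /eqP ->; apply: map_f.
by rewrite add0r IH.
Qed.

Section MonoidRing.
Variables (U : finType) (J : rel U).

Definition mr_delta (c : int) (x : trace J) : mring J := [fsfun m in [fset x] => c].

Lemma mr_deltaE c x m : mr_delta c x m = if m == x then c else 0.
Proof. by rewrite /mr_delta fsfun_fun in_fset1. Qed.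

Lemma finsupp_delta c x : finsupp (mr_delta c x) `<=` [fset x].
Proof.
apply/fsubsetP => m; rewrite mem_finsupp mr_deltaE in_fset1.
by case: (m == x); rewrite ?eqxx.
Qed.

Lemma mr_delta1_inj : injective (mr_delta 1).
Proof.
move=> a b /(congr1 (fun g : mring J => g a)); rewrite !mr_deltaE eqxx.
by case: eqP => // _ /eqP; rewrite oner_eq0.
Qed.

Lemma mr_zeroE m : mr_zero J m = 0.
Proof. exact: fsfun0E. Qed.

Lemma mr_addE (f g : mring J) m : mr_add f g m = f m + g m.
Proof.
rewrite /mr_add fsfun_fun; case: ifP => // /negbT.
by rewrite in_fsetU negb_or => /andP[fm gm]; rewrite !fsfun_dflt.
Qed.

Lemma mr_mulE (f g : mring J) m : mr_mul f g m =
  \sum_(x <- finsupp f) \sum_(y <- finsupp g) (if tmul x y == m then f x * g y else 0).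
Proof.
rewrite /mr_mul fsfun_fun; case: ifP => [//|/negP mfg].
rewrite big1_seq // => x /andP[_ xf]; rewrite big1_seq // => y /andP[_ yg].
by case: eqP => // E; case: mfg; rewrite -E; apply/imfset2P; exists x => //; exists y.
Qed.

Lemma mr_mulE_incl (A B : {fset trace J}) (f g : mring J) m :
  finsupp f `<=` A -> finsupp g `<=` B ->
  mr_mul f g m = \sum_(x <- A) \sum_(y <- B) (if tmul x y == m then f x * g y else 0).
Proof.
move=> fA gB; rewrite mr_mulE (big_fset_incl _ fA) => [|x _ xf]; last first.
  by rewrite big1 // => y _; rewrite fsfun_dflt // mul0r if_same.
apply: eq_bigr => x _; rewrite (big_fset_incl _ gB) // => y _ yg.
by rewrite [g y]fsfun_dflt // mulr0 if_same.
Qed.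

Lemma lincombE (R : eqType) (act : R -> mring J -> mring J) s m :
  lincomb (mr_zero J) (@mr_add U J) act s m = \sum_(p <- s) act p.1 p.2 m.
Proof.
elim: s => [|p s IH] /=; first by rewrite big_nil mr_zeroE.
by rewrite big_cons mr_addE IH.
Qed.

End MonoidRing.

Section Push.
Variables (U' U : finType) (J' : rel U') (J : rel U) (phi : trace J' -> trace J).

Lemma mr_pushE (r : mring J') m :
  mr_push phi r m = \sum_(x <- finsupp r) (if phi x == m then r x else 0).
Proof.
rewrite /mr_push fsfun_fun; case: ifP => [//|/negP mr].
rewrite big1_seq // => x /andP[_ xr].
by case: eqP => // E; case: mr; rewrite -E; apply/imfsetP; exists x.
Qed.

Lemma finsupp_push (r : mring J') : finsupp (mr_push phi r) `<=` phi @` finsupp r.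
Proof.
apply/fsubsetP => m; rewrite mem_finsupp /mr_push fsfun_fun.
by case: ifP => //; rewrite eqxx.
Qed.

Lemma mr_mul_push_delta (r : mring J') t m :
  mr_mul (mr_push phi r) (mr_delta 1 t) m =
  \sum_(x <- finsupp r) (if tmul (phi x) t == m then r x else 0).
Proof.
rewrite (mr_mulE_incl _ (finsupp_push r) (finsupp_delta 1 t)).
pose G x := if tmul (phi x) t == m then r x else 0.
transitivity (\sum_(z <- phi @` finsupp r)
                \sum_(x <- finsupp r) (if z == phi x then G x else 0)).
  apply: eq_bigr => z _; rewrite big_seq_fset1 mr_deltaE eqxx mulr1 mr_pushE.
  case: ifP => [mt|mt]; last by rewrite big1 // => x _; case: eqP => // zx; rewrite /G -zx mt.
  by apply: eq_bigr => x _; rewrite eq_sym; case: eqP => // xz; rewrite /G -xz mt.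
rewrite exchange_big /=; apply: eq_big_seq => x xr.
by rewrite big_pred1_uniq ?fset_uniq // in_imfset.
Qed.

Lemma mr_mul_push_delta_delta c x t m :
  mr_mul (mr_push phi (mr_delta c x)) (mr_delta 1 t) m =
  if tmul (phi x) t == m then c else 0.
Proof.
rewrite mr_mul_push_delta (big_fset_incl _ (finsupp_delta c x)) => [|y _ /fsfun_dflt ->].
  by rewrite big_seq_fset1 mr_deltaE eqxx.
by rewrite if_same.
Qed.

End Push.

Section FreeFactorization.
Variables (U' U : finType) (J' : rel U') (J : rel U) (phi : trace J' -> trace J).
Variables (front : trace J -> trace J') (rest : trace J -> trace J).
Hypothesis front_restK : forall m, tmul (phi (front m)) (rest m) = m.
Hypothesis mul_rest_inj : forall x y m m',
  tmul (phi x) (rest m) = tmul (phi y) (rest m') -> x = y /\ rest m = rest m'.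

Let act (r : mring J') (f : mring J) := mr_mul (mr_push phi r) f.
Local Notation lincomb_act := (lincomb (mr_zero J) (@mr_add U J) act).
Let basis (f : mring J) := exists m, f = mr_delta 1 (rest m).

Lemma lincomb_factorization (f : mring J) :
  f = lincomb_act [seq (mr_delta (f m) (front m), mr_delta 1 (rest m)) | m <- finsupp f].
Proof.
apply/fsfunP => m'; rewrite lincombE big_map /act.
under eq_bigr => m _ do rewrite /= mr_mul_push_delta_delta front_restK.
by rewrite sum_finsupp_pred1.
Qed.

Lemma act_delta_rest (r : mring J') x0 m m' :
  act r (mr_delta 1 (rest m)) (tmul (phi x0) (rest m')) =
  if rest m == rest m' then r x0 else 0.
Proof.
rewrite /act mr_mul_push_delta.
have mul_restE x : (tmul (phi x) (rest m) == tmul (phi x0) (rest m')) =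
              (x == x0) && (rest m == rest m').
  apply/eqP/andP => [/mul_rest_inj[-> ->] | [/eqP -> /eqP ->]] //.
have [E|E] := eqVneq (rest m) (rest m'); last first.
  by rewrite big1 // => x _; rewrite mul_restE (negbTE E) andbF.
by under eq_bigr => x _ do rewrite mul_restE E eqxx andbT; rewrite sum_finsupp_pred1.
Qed.

Lemma lincomb_basis_eq0 (s : seq (mring J' * mring J)) :
  uniq (map snd s) -> (forall p, p \in s -> basis p.2) ->
  lincomb_act s = mr_zero J -> forall p, p \in s -> p.1 = mr_zero J'.
Proof.
move=> s_uniq s_basis s0 p ps; have [m p2] := s_basis p ps.
apply/fsfunP => x0; rewrite mr_zeroE.
rewrite -(sum_pred1_snd (fun r : mring J' => r x0) s_uniq ps).
transitivity (\sum_(q <- s) act q.1 q.2 (tmul (phi x0) (rest m))); last first.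
  by rewrite -(lincombE act) s0 mr_zeroE.
apply: eq_big_seq => q qs; have [mq ->] := s_basis q qs.
by rewrite act_delta_rest p2 (inj_eq (@mr_delta1_inj _ _)).
Qed.

Theorem free_lmodule_factorization :
  free_lmodule (mr_zero J') (mr_zero J) (@mr_add U J) act.
Proof.
exists basis; split; last exact: lincomb_basis_eq0.
move=> f; exists [seq (mr_delta (f m) (front m), mr_delta 1 (rest m)) | m <- finsupp f].
split; last exact: lincomb_factorization.
by move=> _ /mapP[m _ ->]; exists m.
Qed.

End FreeFactorization.

Theorem lemma2p1 (T : finType) (I : rel T)
  (I_sym : symmetric I) (I_irr : irreflexive I) (S0 : {set T}) :
  free_lmodule (mr_zero (restr_rel I S0)) (mr_zero I) (@mr_add T I)
    (fun (r : mring (restr_rel I S0)) (f : mring I) =>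
       mr_mul (mr_push (tmap (restr_rel I S0) I val) r) f).
Proof.
exact: (free_lmodule_factorization (front_restK S0 I_sym) (@incl_mul_rest_inj _ _ S0 I_sym)).
Qed.
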